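(* The term rewriting system $\mathcal{R}=(\Sigma,V,\geq_s,\Delta)$ described in the context is terminating: for every term $\tau\in T[\Sigma,V]$, every sequence of rewriting steps starting from $\tau$ is finite.
   Context: $\mathbb{F}=\mathbb{GF}(2^n)$. Signature $\Sigma=\mathbb{F}\cup\{\oplus,\otimes,f_1,\dots,f_t\}$: elements of $\mathbb{F}$ are constants, $\oplus,\otimes$ binary (field addition and multiplication), $f_1,\dots,f_t$ unary symbols for affine transformations, each $f$ having an associated affine constant $c_f\in\mathbb{F}$. $V$ is a set of variables, $\Sigma\cap V=\emptyset$, and $\geq_s$ is a total order on $V\uplus\Sigma$. Terms $T[\Sigma,V]$: smallest set containing $\mathbb{F}\cup V$ and closed under $\oplus$, $\otimes$, $f_j$; $T_{\backslash\oplus}(\Sigma,V)$ = terms not using $\oplus$. A factor is a term in $\mathbb{F}\cup V$ or of the form $f_i(\tau')$ with $\tau'\in T_{\backslash\oplus}(\Sigma,V)$; a monomial is a product $\alpha_1\otimes\cdots\otimes\alpha_k$ ($k\ge1$) of nonzero factors (sums and products treated as flat sequences). Factor order $\geq_l$: $\alpha\geq_l\alpha'$ iff (i) $\alpha,\alpha'\in\mathbb{F}\cup V$ and $\alpha\geq_s\alpha'$; or (ii) $\alpha=f(\tau)$, $\alpha'=f'(\tau')$ with $f\geq_s f'$, or $f=f'$ and $\tau\geq_p\tau'$; or (iii) $\alpha=f(\tau)$ and $f\geq_s\alpha'$, or $\alpha'=f(\tau)$ and $\alpha\geq_s f$. Monomial order $\geq_p$: lexicographic comparison (w.r.t. $\geq_l$)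 of the factor sequences sorted in descending $\geq_l$-order. Rules $\Delta$ (with $\tau,\tau_1,\tau_2$ terms, $m_i$ monomials, $\alpha_i$ factors, $f$ an affine symbol with constant $c$): R1: $m_1\oplus\cdots\oplus m_k\mapsto m'_1\oplus\cdots\oplus m'_k$ where $(m'_1,\dots,m'_k)={\tt sort}_{\geq_p}(m_1,\dots,m_k)\neq(m_1,\dots,m_k)$; R2: $\alpha_1\cdots\alpha_k\mapsto\alpha'_1\cdots\alpha'_k$ where $(\alpha'_1,\dots,\alpha'_k)={\tt sort}_{\geq_l}(\alpha_1,\dots,\alpha_k)\neq(\alpha_1,\dots,\alpha_k)$; R3: $\tau\oplus\tau\mapsto0$; R4: $\tau\otimes0\mapsto0$; R5: $0\otimes\tau\mapsto0$; R6: $\tau\oplus0\mapsto\tau$; R7: $0\oplus\tau\mapsto\tau$; R8: $\tau\otimes1\mapsto\tau$; R9: $1\otimes\tau\mapsto\tau$; R10: $(\tau_1\oplus\tau_2)\otimes\tau\mapsto(\tau_1\otimes\tau)\oplus(\tau_2\otimes\tau)$; R11: $\tau\otimes(\tau_1\oplus\tau_2)\mapsto(\tau\otimes\tau_1)\oplus(\tau\otimes\tau_2)$; R12: $f(\tau_1\oplus\tau_2)\mapsto f(\tau_1)\oplus f(\tau_2)\oplus c$; R13: $f(0)\mapsto c$. A rewriting step replaces one occurrence of a subterm matching a left-hand side by the corresponding right-hand side. *)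

From mathcomp Require Import all_boot all_order all_algebra.
Set Implicit Arguments. Unset Strict Implicit. Unset Printing Implicit Defensive.
Import GRing.Theory.
Local Open Scope ring_scope.

Section TRS.
Variables (F : finFieldType) (V : Type) (t : nat).

(* Terms T[Sigma,V]: constants of F, variables, (+), (x), and f_1..f_t
   (affine symbol f_i is represented by i : 'I_t). Sums and products are
   binary here; "flat sequences" is modelled by rewriting modulo
   associativity (see [aeq] and [step] below). *)
Inductive term : Type :=
| Cst of F
| Var of V
| Add of term & term
| Mul of term & term
| Aff of 'I_t & term.

Inductive sym : Type :=
| SVar of V
| SCst of F
| SPlus
| STimes
| SAff of 'I_t.

Definition total_order (ges : sym -> sym -> bool) : Prop :=
  [/\ forall x, ges x x,
      forall x y, ges x y -> ges y x -> x = y,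
      forall x y z, ges x y -> ges y z -> ges x z
    & forall x y, ges x y || ges y x].

Fixpoint term_size (u : term) : nat :=
  match u with
  | Cst _ | Var _ => 1
  | Add a b | Mul a b => (term_size a + term_size b).+1
  | Aff _ a => (term_size a).+1
  end.

Fixpoint noplus (u : term) : bool :=
  match u with
  | Cst _ | Var _ => true
  | Add _ _ => false
  | Mul a b => noplus a && noplus b
  | Aff _ a => noplus a
  end.

Definition is_factor (u : term) : bool :=
  match u with
  | Cst _ | Var _ => true
  | Aff _ a => noplus a
  | _ => false
  end.

Definition nonzero_factor (u : term) : bool :=
  match u with
  | Cst a => a != 0
  | _ => is_factor u
  end.

Fixpoint prod_seq (u : term) : seq term :=
  match u with
  | Mul a b => prod_seq a ++ prod_seq b
  | _ => [:: u]
  end.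

Definition is_monomial (u : term) : bool := all nonzero_factor (prod_seq u).

Fixpoint bigsum (s : seq term) : term :=
  match s with
  | [::] => Cst 0
  | [:: x] => x
  | x :: s' => Add x (bigsum s')
  end.

Fixpoint bigprod (s : seq term) : term :=
  match s with
  | [::] => Cst 1
  | [:: x] => x
  | x :: s' => Mul x (bigprod s')
  end.

Fixpoint lex_ge (r : term -> term -> bool) (s s' : seq term) : bool :=
  match s, s' with
  | _, [::] => true
  | [::], _ :: _ => false
  | x :: s1, y :: s1' =>
      if r x y then (if r y x then lex_ge r s1 s1' else true) else false
  end.

Variable ges : sym -> sym -> bool.

Definition sym_of (u : term) : option sym :=
  match u with
  | Cst a => Some (SCst a)
  | Var v => Some (SVar v)
  | _ => None
  end.

Definition ges_opt (x y : option sym) : bool :=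
  match x, y with Some a, Some b => ges a b | _, _ => false end.

(* The factor order >=_l and the monomial order >=_p, mutually recursive.
   They are computed with a fuel argument k; [geq_l]/[geq_p] below supply
   fuel term_size a + term_size b, which is always sufficient (every
   recursive comparison is between subterms of strictly smaller total size). *)
Fixpoint gl (k : nat) (a b : term) {struct k} : bool :=
  match k with
  | 0 => false
  | k'.+1 =>
    let gp := fun x y =>
      lex_ge (gl k') (sort (gl k') (prod_seq x)) (sort (gl k') (prod_seq y)) in
    match a, b with
    | Aff f x, Aff g y =>
        (ges (SAff f) (SAff g) && (f != g)) || ((f == g) && gp x y)
    | Aff f _, _ => ges_opt (Some (SAff f)) (sym_of b)
    | _, Aff g _ => ges_opt (sym_of a) (Some (SAff g))
    | _, _ => ges_opt (sym_of a) (sym_of b)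
    end
  end.

Definition geq_l (a b : term) : bool := gl (term_size a + term_size b) a b.

Definition geq_p (x y : term) : bool :=
  let k := term_size x + term_size y in
  lex_ge (gl k) (sort (gl k) (prod_seq x)) (sort (gl k) (prod_seq y)).

Variable c : 'I_t -> F.

Inductive rule : term -> term -> Prop :=
| R1 (ms : seq term) : all is_monomial ms -> sort geq_p ms <> ms ->
    rule (bigsum ms) (bigsum (sort geq_p ms))
| R2 (fs : seq term) : all is_factor fs -> sort geq_l fs <> fs ->
    rule (bigprod fs) (bigprod (sort geq_l fs))
| R3 u : rule (Add u u) (Cst 0)
| R4 u : rule (Mul u (Cst 0)) (Cst 0)
| R5 u : rule (Mul (Cst 0) u) (Cst 0)
| R6 u : rule (Add u (Cst 0)) u
| R7 u : rule (Add (Cst 0) u) u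
| R8 u : rule (Mul u (Cst 1)) u
| R9 u : rule (Mul (Cst 1) u) u
| R10 u u1 u2 : rule (Mul (Add u1 u2) u) (Add (Mul u1 u) (Mul u2 u))
| R11 u u1 u2 : rule (Mul u (Add u1 u2)) (Add (Mul u u1) (Mul u u2))
| R12 f u1 u2 : rule (Aff f (Add u1 u2)) (Add (Add (Aff f u1) (Aff f u2)) (Cst (c f)))
| R13 f : rule (Aff f (Cst 0)) (Cst (c f)).

Inductive rstep : term -> term -> Prop :=
| RS_root u v : rule u v -> rstep u v
| RS_AddL a a' b : rstep a a' -> rstep (Add a b) (Add a' b)
| RS_AddR a b b' : rstep b b' -> rstep (Add a b) (Add a b')
| RS_MulL a a' b : rstep a a' -> rstep (Mul a b) (Mul a' b)
| RS_MulR a b b' : rstep b b' -> rstep (Mul a b) (Mul a b')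
| RS_Aff f a a' : rstep a a' -> rstep (Aff f a) (Aff f a').

Inductive aeq : term -> term -> Prop :=
| AE_refl u : aeq u u
| AE_sym u v : aeq u v -> aeq v u
| AE_trans u v w : aeq u v -> aeq v w -> aeq u w
| AE_Add a a' b b' : aeq a a' -> aeq b b' -> aeq (Add a b) (Add a' b')
| AE_Mul a a' b b' : aeq a a' -> aeq b b' -> aeq (Mul a b) (Mul a' b')
| AE_Aff f a a' : aeq a a' -> aeq (Aff f a) (Aff f a')
| AE_AddA a b d : aeq (Add (Add a b) d) (Add a (Add b d))
| AE_MulA a b d : aeq (Mul (Mul a b) d) (Mul a (Mul b d)).

Definition step (u v : term) : Prop :=
  exists u' v', [/\ aeq u u', rstep u' v' & aeq v' v].

Definition terminating : Prop :=
  forall s : nat -> term, ~ (forall i, step (s i) (s i.+1)).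

End TRS.

From mathcomp Require Import all_boot all_order all_algebra.
From HB Require Import structures.
From mathcomp Require Import boolp zify.
Set Implicit Arguments. Unset Strict Implicit. Unset Printing Implicit Defensive.

(* Termination follows from the lexicographic measure (interp, disorder).
   [interp] is a polynomial interpretation into the naturals >= 2: it is
   invariant under associativity and under the sorting rules R1 and R2, and
   strictly decreases under R3-R13, also inside any context.  [disorder] counts
   the pairs of summands of a flat sum, and of factors of a flat product, that
   are out of order; R1 and R2 strictly decrease it.  For [disorder] not to
   change under reassociation and under sorting steps performed deeper in the
   term, factors are compared through canonical keys: f(tau) becomes the rose
   tree labelled f whose children are the sorted keys of the factors of tau.
   Then >=_l and >=_p become a total order on keys and its lexicographic
   extension, and a sorting step inside a factor leaves its key unchanged. *)

(** * Sorting and lexicographic orders *)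

Lemma eq_in_sort T (P : pred T) (r1 r2 : rel T) s :
  {in P &, r1 =2 r2} -> all P s -> sort r1 s = sort r2 s.
Proof.
move=> r12 /all_sigP[{}s ->]; rewrite !sort_map; congr (map _ (sort _ _)).
by apply/funext => x; apply/funext => y; apply: r12; apply: valP.
Qed.

(* [lex_ge] of the definitions, for sequences over an arbitrary type. *)
Fixpoint lexge T (r : rel T) (s s' : seq T) : bool :=
  match s, s' with
  | _, [::] => true
  | [::], _ :: _ => false
  | x :: s1, y :: s1' => if r x y then (if r y x then lexge r s1 s1' else true) else false
  end.

Lemma lex_geE F V t (r : rel (term F V t)) : lex_ge r =2 lexge r.
Proof. by move=> s s'; elim: s s' => [|x s IH] [|y s'] //=; rewrite IH. Qed.

Lemma lexge_map T T' (f : T' -> T) (r : rel T) s s' :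
  lexge r (map f s) (map f s') = lexge (relpre f r) s s'.
Proof. by elim: s s' => [|x s IH] [|y s'] //=; rewrite IH. Qed.

Lemma lexge_eq_in T (P : pred T) (r1 r2 : rel T) s s' :
  {in P &, r1 =2 r2} -> all P s -> all P s' -> lexge r1 s s' = lexge r2 s s'.
Proof.
move=> r12; elim: s s' => [|x s IH] [|y s'] //= /andP[Px Ps] /andP[Py Ps'].
by rewrite !r12 // IH.
Qed.

Section LexCompare.
Variables (T : eqType) (cmp : T -> T -> comparison).

Fixpoint lexcmp (s1 s2 : seq T) : comparison :=
  match s1, s2 with
  | [::], [::] => Eq
  | [::], _ :: _ => Lt
  | _ :: _, [::] => Gt
  | x :: s1', y :: s2' => if cmp x y is Eq then lexcmp s1' s2' else cmp x y
  end.

Lemma lexcmp_sym_in s1 s2 : {in s1, forall x y, cmp y x = CompOpp (cmp x y)} ->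
  lexcmp s2 s1 = CompOpp (lexcmp s1 s2).
Proof.
elim: s1 s2 => [|x s1 IH] [|y s2] //= sym; rewrite sym ?mem_head //.
case: (cmp x y) => //=; apply: IH => z z_s1; apply: sym; exact: mem_behead.
Qed.

Lemma lexcmp_eq_in s1 s2 : {in s1, forall x y, cmp x y = Eq -> x = y} ->
  lexcmp s1 s2 = Eq -> s1 = s2.
Proof.
elim: s1 s2 => [|x s1 IH] [|y s2] //= ceq; case E: (cmp x y) => // /IH <-.
  by rewrite (ceq x (mem_head x s1) y E).
by move=> z z_s1; apply: ceq; exact: mem_behead.
Qed.

Lemma lexcmp_trans_in s1 s2 s3 : (forall x y, cmp x y = Eq -> x = y) ->
  {in s1, forall x y z, cmp x y = Gt -> cmp y z = Gt -> cmp x z = Gt} ->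
  lexcmp s1 s2 = Gt -> lexcmp s2 s3 = Gt -> lexcmp s1 s3 = Gt.
Proof.
move=> ceq; elim: s1 s2 s3 => [|x s1 IH] [|y s2] [|z s3] //= tr.
case E1: (cmp x y) => //; case E2: (cmp y z) => //.
- rewrite -(ceq _ _ E2) E1; apply: IH => w w_s1.
  by apply: tr; exact: mem_behead.
- by rewrite (ceq _ _ E1) E2.
- by rewrite -(ceq _ _ E2) E1.
- by rewrite (tr x (mem_head x s1) y z E1 E2).
Qed.

End LexCompare.

Definition cmp_ge T (cmp : T -> T -> comparison) x y :=
  if cmp x y is Lt then false else true.

Section ComparisonOrder.
Variables (T : eqType) (cmp : T -> T -> comparison).
Hypotheses (cmp_sym : forall x y, cmp y x = CompOpp (cmp x y))
  (cmp_eq : forall x y, cmp x y = Eq -> x = y)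
  (cmp_trans : forall x y z, cmp x y = Gt -> cmp y z = Gt -> cmp x z = Gt).

Lemma cmp_ge_total : total (cmp_ge cmp).
Proof. by move=> x y; rewrite /cmp_ge (cmp_sym x y); case: (cmp x y). Qed.

Lemma cmp_ge_trans : transitive (cmp_ge cmp).
Proof.
move=> y x z; rewrite /cmp_ge.
case E1: (cmp x y) => // _; case E2: (cmp y z) => // _.
1,2: by rewrite (cmp_eq E1) E2.
- by rewrite -(cmp_eq E2) E1.
- by rewrite (cmp_trans E1 E2).
Qed.

Lemma cmp_ge_anti : antisymmetric (cmp_ge cmp).
Proof.
move=> x y /andP[]; rewrite /cmp_ge (cmp_sym x y).
by case E: (cmp x y) => // _ _; apply: cmp_eq.
Qed.

Lemma lexcmp_sym s1 s2 : lexcmp cmp s2 s1 = CompOpp (lexcmp cmp s1 s2).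
Proof. by apply: lexcmp_sym_in => x _ y. Qed.

Lemma lexcmp_eq s1 s2 : lexcmp cmp s1 s2 = Eq -> s1 = s2.
Proof. by apply: lexcmp_eq_in => x _ y /cmp_eq. Qed.

Lemma lexcmp_trans s1 s2 s3 :
  lexcmp cmp s1 s2 = Gt -> lexcmp cmp s2 s3 = Gt -> lexcmp cmp s1 s3 = Gt.
Proof. by apply: lexcmp_trans_in => // x _ y z; apply: cmp_trans. Qed.

Lemma lexge_cmp_ge s1 s2 : lexge (cmp_ge cmp) s1 s2 = cmp_ge (lexcmp cmp) s1 s2.
Proof.
elim: s1 s2 => [|x s1 IH] [|y s2] //=.
by rewrite IH /cmp_ge /= (cmp_sym x y); case: (cmp x y).
Qed.

End ComparisonOrder.

(** * Rose trees *)

Inductive rose (S : Type) := Node of S & seq (rose S).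
HB.instance Definition _ (S : Type) := gen_eqMixin (rose S).

Section RoseOrder.
Variables (S : Type) (ges : rel S).
Hypotheses (ges_total : total ges) (ges_trans : transitive ges)
  (ges_anti : antisymmetric ges).

Fixpoint rose_cmp (a b : rose S) {struct a} : comparison :=
  let: Node s cs := a in let: Node s' ds := b in
  if ges s s' then (if ges s' s then lexcmp rose_cmp cs ds else Gt) else Lt.

Lemma rose_nested_ind (P : rose S -> Prop) :
  (forall s cs, {in cs, forall x, P x} -> P (Node s cs)) -> forall r, P r.
Proof.
move=> IHnode; fix IH 1 => -[s cs]; apply: IHnode; move: cs.
(* [IH] is cleared so that [done] cannot apply it to an unguarded argument. *)
fix IHs 1 => -[|y cs] x; first by clear IH; rewrite in_nil.
by rewrite inE => /predU1P[-> | /IHs]; [apply: IH | apply].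
Qed.

Lemma rose_cmpE s s' cs ds : rose_cmp (Node s cs) (Node s' ds) =
  if ges s s' then (if ges s' s then lexcmp rose_cmp cs ds else Gt) else Lt.
Proof. by []. Qed.

Lemma rose_cmp_sym a b : rose_cmp b a = CompOpp (rose_cmp a b).
Proof.
elim/rose_nested_ind: a b => s cs IH [s' ds]; rewrite !rose_cmpE.
have := ges_total s s'; case: (ges s s'); case: (ges s' s) => //= _.
by apply: lexcmp_sym_in => x /IH.
Qed.

Lemma rose_cmp_eq a b : rose_cmp a b = Eq -> a = b.
Proof.
elim/rose_nested_ind: a b => s cs IH [s' ds]; rewrite rose_cmpE.
case ss': (ges s s'); case s's: (ges s' s) => // /(lexcmp_eq_in IH) ->.
by rewrite (@ges_anti s s') ?ss' ?s's.
Qed.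

Lemma rose_cmp_trans a b c : rose_cmp a b = Gt -> rose_cmp b c = Gt -> rose_cmp a c = Gt.
Proof.
elim/rose_nested_ind: a b c => s cs IH [s' ds] [s'' es]; rewrite !rose_cmpE.
case ss': (ges s s'); case s's: (ges s' s) => //;
  case s's'': (ges s' s''); case s''s': (ges s'' s') => // lt1 lt2.
- have /ges_anti e1 : ges s s' && ges s' s by rewrite ss' s's.
  have /ges_anti e2 : ges s' s'' && ges s'' s' by rewrite s's'' s''s'.
  subst s' s''; rewrite ss'; exact: lexcmp_trans_in rose_cmp_eq IH lt1 lt2.
- have /ges_anti e1 : ges s s' && ges s' s by rewrite ss' s's.
  by subst s'; rewrite s's'' s''s'.
- have /ges_anti e2 : ges s' s'' && ges s'' s' by rewrite s's'' s''s'.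
  by subst s''; rewrite ss' s's.
- rewrite (ges_trans ss' s's''); case s''s: (ges s'' s) => //.
  by rewrite (ges_trans s''s ss') in s''s'.
Qed.

Definition rose_ge := cmp_ge rose_cmp.

Lemma rose_ge_total : total rose_ge.
Proof. exact: cmp_ge_total rose_cmp_sym. Qed.

Lemma rose_ge_trans : transitive rose_ge.
Proof. exact: cmp_ge_trans rose_cmp_eq rose_cmp_trans. Qed.

Lemma rose_ge_anti : antisymmetric rose_ge.
Proof. exact: cmp_ge_anti rose_cmp_sym rose_cmp_eq. Qed.

Lemma rose_geE s s' cs ds : rose_ge (Node s cs) (Node s' ds) =
  if ges s s' then (if ges s' s then lexge rose_ge cs ds else true) else false.
Proof.
rewrite /rose_ge /cmp_ge rose_cmpE lexge_cmp_ge; last exact: rose_cmp_sym.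
by case: (ges s s'); case: (ges s' s).
Qed.

Lemma rose_ge_node s s' cs ds : s <> s' \/ lexge rose_ge cs ds ->
  rose_ge (Node s cs) (Node s' ds) = ges s s'.
Proof.
rewrite rose_geE; case ss': (ges s s'); case s's: (ges s' s) => // -[] // neq.
by case: neq; apply: ges_anti; rewrite ss' s's.
Qed.

Lemma rose_ge_same s cs ds : rose_ge (Node s cs) (Node s ds) = lexge rose_ge cs ds.
Proof. by rewrite rose_geE; have := ges_total s s; rewrite orbb => ->. Qed.

Lemma lexge_rose_total : total (lexge rose_ge).
Proof.
move=> s1 s2; rewrite !lexge_cmp_ge; try exact: rose_cmp_sym.
exact/cmp_ge_total/lexcmp_sym/rose_cmp_sym.
Qed.

Lemma lexge_rose_trans : transitive (lexge rose_ge).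
Proof.
move=> s2 s1 s3; rewrite !lexge_cmp_ge; try exact: rose_cmp_sym.
apply: cmp_ge_trans; first exact: lexcmp_eq rose_cmp_eq.
exact: lexcmp_trans rose_cmp_eq rose_cmp_trans.
Qed.

End RoseOrder.

(** * Inversions *)

Section Inversions.
Variables (A : Type) (ge : rel A).

Fixpoint inversions (s : seq A) : nat :=
  if s is x :: s' then count (predC (ge x)) s' + inversions s' else 0.

Definition cross_inversions (s1 s2 : seq A) : nat :=
  \sum_(x <- s1) count (predC (ge x)) s2.

Lemma cross_inversions_catl s1 s2 s3 :
  cross_inversions (s1 ++ s2) s3 = cross_inversions s1 s3 + cross_inversions s2 s3.
Proof. by rewrite /cross_inversions big_cat. Qed.

Lemma cross_inversions_catr s1 s2 s3 :
  cross_inversions s1 (s2 ++ s3) = cross_inversions s1 s2 + cross_inversions s1 s3.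
Proof.
by rewrite /cross_inversions -big_split; apply: eq_bigr => x _; rewrite count_cat.
Qed.

Lemma inversions_cat s1 s2 :
  inversions (s1 ++ s2) = inversions s1 + inversions s2 + cross_inversions s1 s2.
Proof.
elim: s1 => [|x s1 IH] /=; first by rewrite /cross_inversions big_nil addn0.
by rewrite IH count_cat /cross_inversions big_cons; lia.
Qed.

Lemma inversions_eq0 s : (inversions s == 0) = pairwise ge s.
Proof.
elim: s => //= x s <-.
by rewrite addn_eq0 eqn0Ngt -has_count has_predC negbK.
Qed.

Lemma inversions_sort s : total ge -> transitive ge -> inversions (sort ge s) = 0.
Proof.
move=> ge_total ge_trans; apply/eqP.
by rewrite inversions_eq0 -sorted_pairwise ?sort_sorted.
Qed.

End Inversions.

Lemma inversions_map (A B : Type) (f : B -> A) (ge : rel A) s :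
  inversions ge (map f s) = inversions (relpre f ge) s.
Proof. by elim: s => //= x s ->; rewrite count_map. Qed.

Lemma cross_inversions_perm (A : eqType) (ge : rel A) s1 s1' s2 s2' :
  perm_eq s1 s1' -> perm_eq s2 s2' ->
  cross_inversions ge s1 s2 = cross_inversions ge s1' s2'.
Proof.
move=> p1 p2; rewrite /cross_inversions (perm_big _ p1); apply: eq_bigr => x _.
exact/permP.
Qed.

Lemma unsorted_size (A : Type) (r : rel A) s : sort r s <> s -> 1 < size s.
Proof. by case: s => [|x [|y s]]. Qed.

Lemma inversions_sort_lt (T A : Type) (P : pred T) (key : T -> A) (ge : rel A)
    (r : rel T) s :
  total ge -> transitive ge -> {in P &, r =2 relpre key ge} -> all P s ->
  sort r s <> s -> inversions ge (map key (sort r s)) < inversions ge (map key s).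
Proof.
move=> ge_total ge_trans r_key Ps unsorted.
rewrite (eq_in_sort r_key Ps) -sort_map inversions_sort // lt0n inversions_map.
rewrite inversions_eq0; apply: contra_notN unsorted => /pairwise_sorted sorted_s.
rewrite (eq_in_sort r_key Ps); apply: sorted_sort sorted_s => y x z; exact: ge_trans.
Qed.

(** * Keys of factors and monomials *)

HB.instance Definition _ (F : finFieldType) (V : Type) (t : nat) :=
  gen_eqMixin (term F V t).

Section Termination.
Variables (F : finFieldType) (V : Type) (t : nat).
Variables (ges : rel (sym F V t)) (c : 'I_t -> F).
Hypothesis Hges : total_order ges.

Local Notation T := (term F V t).
Local Notation key_ge := (rose_ge ges).

Let ges_total : total ges. Proof. by case: Hges. Qed.
Let ges_trans : transitive ges. Proof. by case: Hges => _ _ tr _ y x z; apply: tr. Qed.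
Let ges_anti : antisymmetric ges.
Proof. by case: Hges => _ anti _ _ x y /andP[]; apply: anti. Qed.

(* A sum is not a factor; it gets the dummy key labelled [SPlus]. *)
Fixpoint factor_keys (u : T) : seq (rose (sym F V t)) :=
  match u with
  | Cst a => [:: Node (SCst V t a) [::]]
  | Var v => [:: Node (SVar F t v) [::]]
  | Add _ _ => [:: Node (SPlus F V t) [::]]
  | Mul a b => factor_keys a ++ factor_keys b
  | Aff f a => [:: Node (SAff F V f) (sort key_ge (factor_keys a))]
  end.

Definition key (u : T) := head (Node (SPlus F V t) [::]) (factor_keys u).

Definition monomial_key (u : T) := sort key_ge (factor_keys u).

Lemma factor_keys_prod_seq (u : T) : factor_keys u = map key (prod_seq u).
Proof. by elim: u => //= a IHa b IHb; rewrite map_cat -IHa -IHb. Qed.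

Lemma term_size_prod_seq (u : T) : all (fun e => term_size e <= term_size u) (prod_seq u).
Proof.
elim: u => [a|v|a _ b _|a IHa b IHb|f a _] /=; rewrite ?leqnn // all_cat.
apply/andP; split; [apply: sub_all IHa | apply: sub_all IHb] => e /= /leq_trans; apply; lia.
Qed.

Lemma noplus_prod_seq (u : T) : noplus u -> all (@is_factor F V t) (prod_seq u).
Proof.
elim: u => //= [a IHa b IHb /andP[/IHa Ha /IHb Hb]|f a _ ->] //.
by rewrite all_cat Ha.
Qed.

Lemma monomial_prod_seq (u : T) : is_monomial u -> all (@is_factor F V t) (prod_seq u).
Proof. by apply: sub_all => -[]. Qed.

Definition small_factor k (e : T) := is_factor e && (term_size e <= k).

Lemma small_prod_seq k (u : T) : term_size u <= k -> all (@is_factor F V t) (prod_seq u) ->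
  all (small_factor k) (prod_seq u).
Proof.
move=> size_u /allP factors; apply/allP => e e_u; rewrite /small_factor factors //=.
exact: leq_trans (allP (term_size_prod_seq u) e e_u) size_u.
Qed.

Lemma lex_ge_sort_gl k (x y : T) : {in small_factor k &, gl ges k =2 relpre key key_ge} ->
  all (small_factor k) (prod_seq x) -> all (small_factor k) (prod_seq y) ->
  lex_ge (gl ges k) (sort (gl ges k) (prod_seq x)) (sort (gl ges k) (prod_seq y)) =
  lexge key_ge (monomial_key x) (monomial_key y).
Proof.
move=> gl_key Px Py; rewrite lex_geE (eq_in_sort gl_key Px) (eq_in_sort gl_key Py).
rewrite (lexge_eq_in gl_key) ?all_sort //.
by rewrite -lexge_map -!sort_map -!factor_keys_prod_seq.
Qed.

Lemma gl_key k (a b : T) : is_factor a -> is_factor b ->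
  term_size a <= k -> term_size b <= k -> gl ges k a b = key_ge (key a) (key b).
Proof.
elim: k a b => [|k IH] a b fa fb; first by case: a fa.
have gl_k : {in small_factor k &, gl ges k =2 relpre key key_ge}.
  by move=> x y /andP[fx sx] /andP[fy sy]; apply: IH.
case: a fa => [x|v|||f x] //; case: b fb => [y|w|||g y] //= fb fa sa sb;
  rewrite /key /=; last first.
  rewrite !ltnS in sa sb; have [<-|neq_fg] := eqVneq f g.
    rewrite (rose_ge_same ges_total) andbF /= lex_ge_sort_gl //.
    - exact: small_prod_seq sa (noplus_prod_seq fa).
    - exact: small_prod_seq sb (noplus_prod_seq fb).
  rewrite (rose_ge_node ges_total ges_anti) /= ?andbT ?orbF //.
  by left => -[] /eqP; rewrite (negbTE neq_fg).
all: rewrite (rose_ge_node ges_total ges_anti) //; by [right | left | right; case: (sort _ _)].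
Qed.

Lemma geq_l_key (a b : T) : is_factor a -> is_factor b ->
  geq_l ges a b = key_ge (key a) (key b).
Proof. by move=> fa fb; apply: gl_key; rewrite ?leq_addr ?leq_addl. Qed.

Lemma geq_p_key (x y : T) : is_monomial x -> is_monomial y ->
  geq_p ges x y = lexge key_ge (monomial_key x) (monomial_key y).
Proof.
move=> mx my; apply: lex_ge_sort_gl.
- by move=> a b /andP[fa sa] /andP[fb sb]; apply: gl_key.
- exact: small_prod_seq (leq_addr _ _) (monomial_prod_seq mx).
- exact: small_prod_seq (leq_addl _ _) (monomial_prod_seq my).
Qed.

Let key_ge_total : total key_ge := rose_ge_total ges_total.
Let key_ge_trans : transitive key_ge := rose_ge_trans ges_trans ges_anti.
Let key_ge_anti : antisymmetric key_ge := rose_ge_anti ges_total ges_anti.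
Let lexge_key_total : total (lexge key_ge) := lexge_rose_total ges_total.
Let lexge_key_trans : transitive (lexge key_ge) :=
  lexge_rose_trans ges_total ges_trans ges_anti.

Lemma monomial_key_perm (u v : T) :
  perm_eq (factor_keys u) (factor_keys v) -> monomial_key u = monomial_key v.
Proof. exact/perm_sortP. Qed.

(** * The termination measure *)

Fixpoint sum_seq (u : T) : seq T :=
  if u is Add a b then sum_seq a ++ sum_seq b else [:: u].

Definition summand_keys (u : T) := map monomial_key (sum_seq u).

Fixpoint interp (u : T) : nat :=
  match u with
  | Cst _ | Var _ => 2
  | Add a b => interp a + interp b + 1
  | Mul a b => interp a * interp b
  | Aff _ a => 5 * interp a
  end.

Fixpoint disorder (u : T) : nat :=
  match u with
  | Add a b => disorder a + disorder b +
      cross_inversions (lexge key_ge) (summand_keys a) (summand_keys b)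
  | Mul a b => disorder a + disorder b +
      cross_inversions key_ge (factor_keys a) (factor_keys b)
  | Aff _ a => disorder a
  | _ => 0
  end.

Lemma interp_ge2 (u : T) : 2 <= interp u.
Proof. by elim: u => //= [a Ha b Hb|a Ha b Hb|f a Ha]; nia. Qed.

Lemma interp_sum_seq (u : T) : (interp u).+1 = \sum_(e <- sum_seq u) (interp e).+1.
Proof.
elim: u => [a|v|a IHa b IHb|a _ b _|f a _]; rewrite /= ?big_seq1 //.
by rewrite big_cat -IHa -IHb /=; lia.
Qed.

Lemma interp_prod_seq (u : T) : interp u = \prod_(e <- prod_seq u) interp e.
Proof.
elim: u => [a|v|a _ b _|a IHa b IHb|f a _]; rewrite /= ?big_seq1 //.
by rewrite big_cat -IHa -IHb.
Qed.

Lemma disorder_sum_seq (u : T) :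
  disorder u =
  \sum_(e <- sum_seq u) disorder e + inversions (lexge key_ge) (summand_keys u).
Proof.
elim: u => [a|v|a IHa b IHb|a _ b _|f a _]; rewrite /= ?big_seq1 ?addn0 //.
by rewrite IHa IHb /summand_keys /= map_cat inversions_cat big_cat /=; lia.
Qed.

Lemma disorder_prod_seq (u : T) :
  disorder u = \sum_(e <- prod_seq u) disorder e + inversions key_ge (factor_keys u).
Proof.
elim: u => [a|v|a _ b _|a IHa b IHb|f a _]; rewrite /= ?big_seq1 ?addn0 //.
by rewrite inversions_cat big_cat IHa IHb /=; lia.
Qed.

Lemma aeq_measures (u v : T) : aeq u v ->
  [/\ interp u = interp v, disorder u = disorder v,
      summand_keys u = summand_keys v & factor_keys u = factor_keys v].
Proof.
elim=> {u v} //=.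
- by move=> u v _ [-> -> -> ->].
- by move=> u v w _ [-> -> -> ->] _ [-> -> -> ->].
- move=> a a' b b' _ [-> -> sa _] _ [-> -> sb _].
  by rewrite sa sb /summand_keys /= !map_cat -!/(summand_keys _) sa sb.
- move=> a a' b b' _ [-> -> _ fa] _ [-> -> _ fb].
  by rewrite /summand_keys /= /monomial_key /= fa fb.
- by move=> f a a' _ [-> -> _ fa]; rewrite /summand_keys /= /monomial_key /= fa.
- move=> a b d; rewrite /summand_keys /= !map_cat catA !cross_inversions_catl.
  by rewrite !cross_inversions_catr; split => //; lia.
- move=> a b d; rewrite /summand_keys /= /monomial_key /= !catA mulnA.
  by rewrite !cross_inversions_catl !cross_inversions_catr; split => //; lia.
Qed.

Definition same_keys (u v : T) :=
  perm_eq (summand_keys u) (summand_keys v) /\ perm_eq (factor_keys u) (factor_keys v).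

Definition descent (u v : T) := interp v < interp u \/
  [/\ interp v = interp u, disorder v < disorder u & same_keys u v].

Lemma sum_seq_bigsum ms : all (@is_monomial F V t) ms -> ms != [::] ->
  sum_seq (bigsum ms) = ms.
Proof.
elim: ms => [|m [|m' ms] IH] // /andP[mono_m mono_ms] _; first by case: m mono_m.
by rewrite /= IH //; case: m mono_m.
Qed.

Lemma prod_seq_bigprod fs : all (@is_factor F V t) fs -> fs != [::] ->
  prod_seq (bigprod fs) = fs.
Proof.
elim: fs => [|f [|f' fs] IH] // /andP[fac_f fac_fs] _; first by case: f fac_f.
by rewrite /= IH //; case: f fac_f.
Qed.

Lemma factor_keys_bigsum ms : 1 < size ms ->
  factor_keys (bigsum ms) = [:: Node (SPlus F V t) [::]].
Proof. by case: ms => [|? [|? ?]]. Qed.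

Lemma summand_keys_bigprod fs : 1 < size fs ->
  summand_keys (bigprod fs) = [:: monomial_key (bigprod fs)].
Proof. by case: fs => [|? [|? ?]]. Qed.

Lemma sort_summands_descent ms : all (@is_monomial F V t) ms ->
  sort (geq_p ges) ms <> ms -> descent (bigsum ms) (bigsum (sort (geq_p ges) ms)).
Proof.
set ms' := sort _ ms => mono unsorted; have size_ms := unsorted_size unsorted.
have perm_ms : perm_eq ms' ms by rewrite perm_sort.
have size_ms' : 1 < size ms' by rewrite size_sort.
have sum_ms : sum_seq (bigsum ms) = ms.
  by apply: sum_seq_bigsum; last by case: (ms) size_ms.
have sum_ms' : sum_seq (bigsum ms') = ms'.
  by apply: sum_seq_bigsum; [rewrite all_sort | case: (ms') size_ms'].
right; split.
- by apply: succn_inj; rewrite !interp_sum_seq sum_ms sum_ms' (perm_big _ perm_ms).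
- rewrite !disorder_sum_seq /summand_keys sum_ms sum_ms' (perm_big _ perm_ms) ltn_add2l.
  by apply: inversions_sort_lt mono unsorted => // x y mx my; apply: geq_p_key.
- split; first by rewrite /summand_keys sum_ms sum_ms' perm_map // perm_sym.
  by rewrite !factor_keys_bigsum.
Qed.

Lemma sort_factors_descent fs : all (@is_factor F V t) fs ->
  sort (geq_l ges) fs <> fs -> descent (bigprod fs) (bigprod (sort (geq_l ges) fs)).
Proof.
set fs' := sort _ fs => fac unsorted; have size_fs := unsorted_size unsorted.
have perm_fs : perm_eq fs' fs by rewrite perm_sort.
have size_fs' : 1 < size fs' by rewrite size_sort.
have prod_fs : prod_seq (bigprod fs) = fs.
  by apply: prod_seq_bigprod; last by case: (fs) size_fs.
have prod_fs' : prod_seq (bigprod fs') = fs'.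
  by apply: prod_seq_bigprod; [rewrite all_sort | case: (fs') size_fs'].
have keys_perm : perm_eq (factor_keys (bigprod fs)) (factor_keys (bigprod fs')).
  by rewrite !factor_keys_prod_seq prod_fs prod_fs' perm_map // perm_sym.
right; split.
- by rewrite !interp_prod_seq prod_fs prod_fs' (perm_big _ perm_fs).
- rewrite !disorder_prod_seq !factor_keys_prod_seq prod_fs prod_fs' (perm_big _ perm_fs).
  rewrite ltn_add2l; apply: inversions_sort_lt fac unsorted => // a b fa fb.
  exact: geq_l_key.
- by rewrite /same_keys !summand_keys_bigprod // (monomial_key_perm keys_perm).
Qed.

Lemma rule_descent (u v : T) : rule ges c u v -> descent u v.
Proof.
case=> {u v} [ms|fs|u|u|u|u|u|u|u|u u1 u2|u u1 u2|f u1 u2|f].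
- exact: sort_summands_descent.
- exact: sort_factors_descent.
all: left => /=.
1-7: by move: (interp_ge2 u); lia.
1-2: by move: (interp_ge2 u) (interp_ge2 u1) (interp_ge2 u2); nia.
- by move: (interp_ge2 u1) (interp_ge2 u2); lia.
- by [].
Qed.

Lemma rstep_descent (u v : T) : rstep ges c u v -> descent u v.
Proof.
elim=> {u v} [u v /rule_descent // | a a' b | a b b' | a a' b | a b b' | f a a'] _
  [lt | [eq_interp lt_disorder [sk fk]]];
  try by left => /=; first [lia | move: (interp_ge2 a) (interp_ge2 b); nia].
- right; split => /=; first by rewrite eq_interp.
  + by rewrite (cross_inversions_perm _ sk (perm_refl _)) !ltn_add2r.
  + by split; rewrite // /summand_keys /= !map_cat perm_cat2r.
- right; split => /=; first by rewrite eq_interp.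
  + by rewrite (cross_inversions_perm _ (perm_refl _) sk) ltn_add2r ltn_add2l.
  + by split; rewrite // /summand_keys /= !map_cat perm_cat2l.
- right; split => /=; first by rewrite eq_interp.
  + by rewrite (cross_inversions_perm _ fk (perm_refl _)) !ltn_add2r.
  + have fk_ab : perm_eq (factor_keys (Mul a b)) (factor_keys (Mul a' b)).
      by rewrite /= perm_cat2r.
    by split; rewrite // /summand_keys /= (monomial_key_perm fk_ab).
- right; split => /=; first by rewrite eq_interp.
  + by rewrite (cross_inversions_perm _ (perm_refl _) fk) ltn_add2r ltn_add2l.
  + have fk_ab : perm_eq (factor_keys (Mul a b)) (factor_keys (Mul a b')).
      by rewrite /= perm_cat2l.
    by split; rewrite // /summand_keys /= (monomial_key_perm fk_ab).
- right; split => //=; first by rewrite eq_interp.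
  have mk_a : sort key_ge (factor_keys a) = sort key_ge (factor_keys a').
    exact: monomial_key_perm.
  by rewrite /same_keys /summand_keys /= /monomial_key /= mk_a.
Qed.

Lemma step_measure_lt (u v : T) : step ges c u v ->
  interp v < interp u \/ interp v = interp u /\ disorder v < disorder u.
Proof.
case=> u' [v' [/aeq_measures [iu du _ _] /rstep_descent uv /aeq_measures [iv dv _ _]]].
by rewrite iu du -iv -dv; case: uv => [|[]]; [left | right].
Qed.

End Termination.

Lemma no_lex_descent (f g : nat -> nat) :
  ~ (forall i, f i.+1 < f i \/ f i.+1 = f i /\ g i.+1 < g i).
Proof.
move=> desc; suff no_start n m i : f i = n -> g i = m -> False.
  exact: (no_start _ _ 0 erefl erefl).
elim/ltn_ind: n m i => n IHn m; elim/ltn_ind: m => m IHm i fi gi.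
case: (desc i) => [lt | [eq lt]].
- by apply: (IHn (f i.+1) _ (g i.+1) i.+1); rewrite -?fi.
- by apply: (IHm (g i.+1) _ i.+1); rewrite -?gi ?eq.
Qed.

Theorem lemma2 (n : nat) (F : finFieldType) (HF : #|F| = (2 ^ n)%N)
  (V : Type) (t : nat) (ges : sym F V t -> sym F V t -> bool)
  (Hges : total_order ges) (c : 'I_t -> F) :
  terminating ges c.
Proof.
move=> s steps.
apply: (@no_lex_descent (fun i => interp (s i)) (fun i => disorder ges (s i))) => i.
exact (step_measure_lt Hges (steps i)).
Qed.
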